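(* Let $\Phi$ be an irreducible reduced root system with basis $\Delta$, Weyl group $W$ with length function $l$, highest root $\tilde\alpha$. For every positive long root $\alpha$, $l(x_\alpha s_{\tilde\alpha})=l(s_{\tilde\alpha})-l(x_\alpha)$.
   Context: Long roots are those of maximal length for a $W$-invariant scalar product $(\cdot|\cdot)$. $\tilde I=\{\alpha\in\Delta:(\tilde\alpha|\alpha)=0\}$, $\Phi_{\tilde I}^+$ the positive roots in the span of $\tilde I$, $X_{\tilde I}=\{w\in W:w(\Phi^+_{\tilde I})\subset\Phi^+\}$; for a long root $\alpha$, $x_\alpha$ is the unique element of $X_{\tilde I}$ with $x_\alpha(\tilde\alpha)=\alpha$ (it exists and is unique since $w\mapsto w(\tilde\alpha)$ induces a bijection $X_{\tilde I}\to\Phi_{\mathrm{lg}}$). *)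

From HB Require Import structures.
From mathcomp Require Import all_boot all_order all_algebra.
From mathcomp Require Import reals.
From Stdlib Require Import ClassicalEpsilon.
Set Implicit Arguments. Unset Strict Implicit. Unset Printing Implicit Defensive.
Import Order.TTheory GRing.Theory Num.Theory.
Local Open Scope ring_scope.

Section RootSystems.
Variables (R : realType) (n : nat).
Implicit Types (u v a b w x : 'cV[R]_n) (Phi Delta S : seq 'cV[R]_n).

Definition dot u v : R := \sum_(i < n) u i 0 * v i 0.

Definition refl_mx a : 'M[R]_n := 1%:M - (2 / dot a a) *: (a *m a^T).

Definition in_span S v : Prop :=
  exists c : 'I_(size S) -> R, v = \sum_(i < size S) c i *: S`_i.

Definition root_system Phi : Prop :=
  [/\ 0 \notin Phi,
      forall v, in_span Phi v,
      forall a b, a \in Phi -> b \in Phi -> refl_mx a *m b \in Phi &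
      forall a b, a \in Phi -> b \in Phi ->
        exists z : int, 2 * dot b a / dot a a = z%:~R].

Definition reduced Phi : Prop :=
  forall a (c : R), a \in Phi -> c *: a \in Phi -> c = 1 \/ c = -1.

Definition irreducible Phi : Prop :=
  Phi <> [::] /\
  forall P : pred 'cV[R]_n,
    (forall a b, a \in Phi -> b \in Phi -> P a -> ~~ P b -> dot a b = 0) ->
    (forall a, a \in Phi -> P a) \/ (forall a, a \in Phi -> ~~ P a).

Definition is_basis Phi Delta : Prop :=
  [/\ {subset Delta <= Phi},
      (forall c : 'I_(size Delta) -> R,
         \sum_(i < size Delta) c i *: Delta`_i = 0 -> forall i, c i = 0) &
      forall b, b \in Phi -> exists k : 'I_(size Delta) -> nat,
        b = \sum_(i < size Delta) (k i)%:R *: Delta`_i \/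
        b = - \sum_(i < size Delta) (k i)%:R *: Delta`_i].

Definition nonneg_comb Delta v : Prop :=
  exists k : 'I_(size Delta) -> nat, v = \sum_(i < size Delta) (k i)%:R *: Delta`_i.

Definition pos_root Phi Delta b : Prop := b \in Phi /\ nonneg_comb Delta b.

Definition highest_root Phi Delta ah : Prop :=
  pos_root Phi Delta ah /\
  forall b, pos_root Phi Delta b -> nonneg_comb Delta (ah - b).

Definition long_root Phi a : Prop :=
  a \in Phi /\ forall b, b \in Phi -> dot b b <= dot a a.

Definition prod_refl (s : seq 'cV[R]_n) : 'M[R]_n :=
  \big[mulmx/1%:M]_(a <- s) refl_mx a.

Definition in_W Phi (w : 'M[R]_n) : Prop :=
  exists s, {subset s <= Phi} /\ w = prod_refl s.

Definition is_length Delta (w : 'M[R]_n) (k : nat) : Prop :=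
  (exists s, {subset s <= Delta} /\ w = prod_refl s /\ size s = k) /\
  (forall s, {subset s <= Delta} -> w = prod_refl s -> (k <= size s)%N).

Definition weyl_length Delta (w : 'M[R]_n) : nat :=
  epsilon (inhabits 0%N) (is_length Delta w).

Definition Itilde Delta ah : seq 'cV[R]_n := [seq a <- Delta | dot ah a == 0].

Definition in_X Phi Delta ah (w : 'M[R]_n) : Prop :=
  in_W Phi w /\
  forall b, pos_root Phi Delta b -> in_span (Itilde Delta ah) b ->
    pos_root Phi Delta (w *m b).

End RootSystems.

From mathcomp Require Import all_boot all_order all_algebra.
From mathcomp Require Import reals boolp.
From mathcomp Require Import ring lra.
From Stdlib Require Import ClassicalEpsilon.
Set Implicit Arguments. Unset Strict Implicit. Unset Printing Implicit Defensive.
Import Order.TTheory GRing.Theory Num.Theory.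
Local Open Scope ring_scope.

(* The length of w in the Weyl group equals the number ninv w of positive
   roots that w sends to negative roots.  If x lies in X_I~, every positive
   root b inverted by x is also inverted by s_ah: when (ah|b) = 0, b lies in
   the span of I~ and x keeps it positive; otherwise (ah|b) > 0 and, ah being
   the highest root, s_ah b = b - c ah with c >= 1 is negative.  Pairing each
   positive root b with the positive one of +-s_ah b then splits the
   inversions of s_ah into those of x and those of x s_ah.  Hence the identity
   holds for every x in X_I~; the hypotheses on alpha only single out
   x = x_alpha. *)

Section ScalarProduct.
Variables (R : realType) (n : nat).
Implicit Types (a u v w : 'cV[R]_n) (U V : 'M[R]_n).

Lemma dotE u v : dot u v = (u^T *m v) 0 0.
Proof. by rewrite /dot !mxE; apply: eq_bigr => i _; rewrite !mxE. Qed.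

Lemma mul_trmx_dot u v : u^T *m v = (dot u v)%:M.
Proof. by apply/matrixP => i j; rewrite !ord1 [RHS]mxE eqxx mulr1n dotE. Qed.

Lemma dotC u v : dot u v = dot v u.
Proof. by rewrite /dot; apply: eq_bigr => i _; rewrite mulrC. Qed.

Lemma dotDr u v w : dot u (v + w) = dot u v + dot u w.
Proof. by rewrite /dot -big_split; apply: eq_bigr => i _; rewrite mxE mulrDr. Qed.

Lemma dotZr u v (c : R) : dot u (c *: v) = c * dot u v.
Proof. by rewrite /dot mulr_sumr; apply: eq_bigr => i _; rewrite mxE mulrCA. Qed.

Lemma dotNr u v : dot u (- v) = - dot u v.
Proof. by rewrite -scaleN1r dotZr mulN1r. Qed.

Lemma dotNl u v : dot (- v) u = - dot v u.
Proof. by rewrite dotC dotNr dotC. Qed.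

Lemma dot_sumr u (I : Type) (r : seq I) (P : pred I) (F : I -> 'cV[R]_n) :
  dot u (\sum_(i <- r | P i) F i) = \sum_(i <- r | P i) dot u (F i).
Proof.
elim/big_rec2: _ => [|i x y _ <-]; last by rewrite dotDr.
by rewrite /dot big1 // => i _; rewrite mxE mulr0.
Qed.

Lemma dot_ge0 u : 0 <= dot u u.
Proof. by rewrite /dot sumr_ge0 // => i _; rewrite -expr2 sqr_ge0. Qed.

Lemma dot_eq0 u : (dot u u == 0) = (u == 0).
Proof.
apply/idP/idP => [|/eqP->]; last by rewrite /dot big1 // => i _; rewrite mxE mul0r.
rewrite /dot psumr_eq0 => [/allP u0|i _]; last by rewrite -expr2 sqr_ge0.
apply/eqP/matrixP => i j; rewrite ord1 mxE.
by have /implyP/(_ isT) := u0 i (mem_index_enum _); rewrite mulf_eq0 orbb => /eqP.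
Qed.

Lemma dot_gt0 u : u != 0 -> 0 < dot u u.
Proof. by move=> u0; rewrite lt_def dot_ge0 dot_eq0 u0. Qed.

Definition orthogonal_mx U := U^T *m U = 1%:M.

Lemma orthogonal_mul U V :
  orthogonal_mx U -> orthogonal_mx V -> orthogonal_mx (U *m V).
Proof.
by move=> hU hV; rewrite /orthogonal_mx trmx_mul mulmxA -(mulmxA V^T) hU mulmx1.
Qed.

Lemma dot_orthogonal U u v : orthogonal_mx U -> dot (U *m u) (U *m v) = dot u v.
Proof. by move=> hU; rewrite !dotE trmx_mul mulmxA -(mulmxA u^T) hU mulmx1. Qed.

Lemma refl_mxE a v : refl_mx a *m v = v - (2 * dot a v / dot a a) *: a.
Proof.
rewrite /refl_mx mulmxBl mul1mx -scalemxAl -mulmxA mul_trmx_dot mul_mx_scalar.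
by rewrite scalerA mulrAC.
Qed.

Lemma refl_mxN a : refl_mx (- a) = refl_mx a.
Proof. by rewrite /refl_mx dotNl dotNr opprK linearN /= mulNmx mulmxN opprK. Qed.

Lemma refl_mx_self a : a != 0 -> refl_mx a *m a = - a.
Proof.
move=> a0; rewrite refl_mxE mulfK ?dot_eq0 //.
by rewrite scaler_nat mulr2n opprD addNKr.
Qed.

Lemma refl_mxK a : a != 0 -> refl_mx a *m refl_mx a = 1%:M.
Proof.
move=> a0; have d0 : dot a a != 0 by rewrite dot_eq0.
have aaK : (a *m a^T) *m (a *m a^T) = dot a a *: (a *m a^T).
  by rewrite mulmxA -(mulmxA a) mul_trmx_dot mul_mx_scalar scalemxAl.
rewrite /refl_mx mulmxBl mul1mx mulmxBr mulmx1 -!scalemxAl -!scalemxAr aaK !scalerA.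
have -> : 2 / dot a a * (2 / dot a a) * dot a a = 2 / dot a a + 2 / dot a a by field.
by rewrite scalerDl opprD opprK addKr subrK.
Qed.

Lemma refl_mx_orthogonal a : a != 0 -> orthogonal_mx (refl_mx a).
Proof.
move=> a0; rewrite /orthogonal_mx; have -> : (refl_mx a)^T = refl_mx a.
  by rewrite /refl_mx linearB /= linearZ /= trmx_mul trmxK tr_scalar_mx.
exact: refl_mxK.
Qed.

Lemma refl_mx_conj U a : orthogonal_mx U -> refl_mx (U *m a) *m U = U *m refl_mx a.
Proof.
move=> hU; rewrite /refl_mx dot_orthogonal // mulmxBl mul1mx mulmxBr mulmx1.
by rewrite -scalemxAl -scalemxAr trmx_mul -!mulmxA hU mulmx1.
Qed.

End ScalarProduct.

Lemma sum_seq_invol (T : eqType) (s : seq T) (phi : T -> T) (F : T -> nat) :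
  uniq s -> {in s, forall x, phi x \in s} -> {in s, involutive phi} ->
  (\sum_(x <- s) F (phi x) = \sum_(x <- s) F x)%N.
Proof.
move=> s_uniq phi_s phiK; rewrite -(big_map phi predT F); apply/perm_big/uniq_perm => //.
  by rewrite map_inj_in_uniq // => x y xs ys e; rewrite -(phiK x xs) -(phiK y ys) e.
move=> x; apply/mapP/idP => [[y ys ->]|xs]; first exact: phi_s.
by exists (phi x); rewrite ?phi_s ?phiK.
Qed.

Lemma natr_eq_opp (R : numDomainType) (k l : nat) : k%:R = - l%:R :> R -> k = 0%N.
Proof.
move=> e; have /eqP : (k + l)%:R = 0 :> R by rewrite natrD e addNr.
by rewrite pnatr_eq0 addn_eq0 => /andP [/eqP].
Qed.

Section RootSystem.
Variables (R : realType) (n : nat) (Phi Delta : seq 'cV[R]_n).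
Hypothesis Phi_root : root_system Phi.
Hypothesis Phi_reduced : reduced Phi.
Hypothesis Delta_basis : is_basis Phi Delta.
Implicit Types (a b : 'cV[R]_n) (s t u v : seq 'cV[R]_n) (w : 'M[R]_n).
Implicit Types (i j : 'I_(size Delta)).
Local Notation m := (size Delta).
Local Notation pos := (pos_root Phi Delta).

Definition simple_comb (c : 'I_m -> R) : 'cV[R]_n := \sum_(i < m) c i *: Delta`_i.

Definition natc (k : 'I_m -> nat) (i : 'I_m) : R := (k i)%:R.

Lemma simple_combB c d :
  simple_comb c - simple_comb d = simple_comb (fun i => c i - d i).
Proof. by rewrite /simple_comb -sumrB; apply: eq_bigr => i _; rewrite scalerBl. Qed.

Lemma simple_combN c : - simple_comb c = simple_comb (fun i => - c i).
Proof. by rewrite /simple_comb -sumrN; apply: eq_bigr => i _; rewrite scaleNr. Qed.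

Lemma simple_combZ (x : R) c : x *: simple_comb c = simple_comb (fun i => x * c i).
Proof. by rewrite /simple_comb scaler_sumr; apply: eq_bigr => i _; rewrite scalerA. Qed.

Lemma simple_comb_inj c d : simple_comb c = simple_comb d -> c =1 d.
Proof.
case: Delta_basis => _ Delta_free _ cd i; apply/eqP; rewrite -subr_eq0; apply/eqP.
apply: Delta_free (fun i => c i - d i) _ i.
by rewrite -[LHS]/(simple_comb _) -simple_combB cd subrr.
Qed.

Lemma simple_comb_delta (x : R) i :
  simple_comb (fun j => x * (j == i)%:R) = x *: Delta`_i.
Proof.
rewrite /simple_comb (bigD1 i) //= eqxx mulr1 big1 ?addr0 // => j /negbTE ->.
by rewrite mulr0 scale0r.
Qed.

Lemma refl_simple_comb i c :
  refl_mx Delta`_i *m simple_comb c = simple_comb (fun j =>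
    c j - 2 * dot Delta`_i (simple_comb c) / dot Delta`_i Delta`_i * (j == i)%:R).
Proof. by rewrite refl_mxE -simple_comb_delta simple_combB. Qed.

Lemma simple_root_mem i : Delta`_i \in Phi.
Proof. by case: Delta_basis => sub _ _; apply/sub/mem_nth. Qed.

Lemma root_neq0 b : b \in Phi -> b != 0.
Proof. by case: Phi_root => Phi0 _ _ _ bP; apply: contraNneq Phi0 => <-. Qed.

Lemma refl_root a b : a \in Phi -> b \in Phi -> refl_mx a *m b \in Phi.
Proof. by case: Phi_root => _ _ + _; apply. Qed.

Lemma root_opp b : b \in Phi -> - b \in Phi.
Proof. by move=> bP; rewrite -refl_mx_self ?root_neq0 ?refl_root. Qed.

Lemma cartan_ge1 a b : a \in Phi -> b \in Phi -> 0 < dot a b ->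
  1 <= 2 * dot a b / dot a a.
Proof.
move=> aP bP ab_gt0; case: Phi_root => _ _ _ /(_ _ _ aP bP) [z].
rewrite dotC => ez; have : 0 < z%:~R :> R.
  by rewrite -ez divr_gt0 ?mulr_gt0 ?dot_gt0 ?root_neq0.
by rewrite ez ltr0z ler1z gtz0_ge1.
Qed.

Lemma root_pos_or_neg b : b \in Phi -> pos b \/ pos (- b).
Proof.
move=> bP; case: Delta_basis => _ _ /(_ b bP) [k [bk|bk]].
  by left; split; last exists k.
by right; split; [exact: root_opp | exists k; rewrite bk opprK].
Qed.

Lemma pos_root_oppN b : pos b -> ~ pos (- b).
Proof.
move=> [bP [k]]; rewrite -/(simple_comb (natc k)) => bk [_ [l]].
rewrite -/(simple_comb (natc l)) => bl.
have kl : simple_comb (natc k) = simple_comb (fun i => - natc l i).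
  by rewrite -simple_combN -bk -bl opprK.
have k0 i : k i = 0%N by apply: (@natr_eq_opp R _ (l i)); apply: simple_comb_inj kl i.
case/negP: (root_neq0 bP); rewrite bk /simple_comb big1 // => i _.
by rewrite /natc k0 scale0r.
Qed.

Lemma simple_root_pos i : pos Delta`_i.
Proof.
split; first exact: simple_root_mem.
exists (fun j => nat_of_bool (j == i)); rewrite -[LHS]scale1r -simple_comb_delta.
by apply: eq_bigr => j _; rewrite mul1r; case: (j == i).
Qed.

Lemma refl_simple_pos i b : pos b -> b != Delta`_i -> pos (refl_mx Delta`_i *m b).
Proof.
move=> [bP [k]]; rewrite -/(simple_comb (natc k)) => bk bi.
have sbP : refl_mx Delta`_i *m b \in Phi by rewrite refl_root ?simple_root_mem.
case: (root_pos_or_neg sbP) => // [[_ [l]]]; rewrite -/(simple_comb (natc l)) => sbl.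
exfalso; have : refl_mx Delta`_i *m simple_comb (natc k) =
                 simple_comb (fun j => - natc l j).
  by rewrite -simple_combN -sbl opprK bk.
rewrite refl_simple_comb => /simple_comb_inj kl.
have kj j : j != i -> k j = 0%N.
  move=> ji; apply: (@natr_eq_opp R _ (l j)); have := kl j.
  by rewrite (negbTE ji) mulr0 subr0.
have bki : b = (k i)%:R *: Delta`_i.
  rewrite bk -simple_comb_delta; apply: eq_bigr => j _; rewrite /natc.
  by case: eqVneq => [->|/kj ->]; rewrite ?mulr1 ?mulr0.
have kiP : (k i)%:R *: Delta`_i \in Phi by rewrite -bki.
have [k1|kN1] := Phi_reduced (simple_root_mem i) kiP.
  by move: bi; rewrite bki k1 scale1r eqxx.
by have := ler0n R (k i); rewrite kN1; lra.
Qed.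

Lemma prod_refl_nil : prod_refl [::] = 1%:M :> 'M[R]_n.
Proof. by rewrite /prod_refl big_nil. Qed.

Lemma prod_refl_cons a s : prod_refl (a :: s) = refl_mx a *m prod_refl s.
Proof. by rewrite /prod_refl big_cons. Qed.

Lemma prod_refl_cat s t : prod_refl (s ++ t) = prod_refl s *m prod_refl t.
Proof.
elim: s => [|a s IH]; first by rewrite prod_refl_nil mul1mx.
by rewrite cat_cons !prod_refl_cons IH mulmxA.
Qed.

Lemma prod_refl1 a : prod_refl [:: a] = refl_mx a.
Proof. by rewrite prod_refl_cons prod_refl_nil mulmx1. Qed.

Lemma prod_refl_rcons s a : prod_refl (rcons s a) = prod_refl s *m refl_mx a.
Proof. by rewrite -cats1 prod_refl_cat prod_refl1. Qed.

Lemma prod_refl_root s b : {subset s <= Phi} -> b \in Phi -> prod_refl s *m b \in Phi.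
Proof.
elim: s => [|a s IH] sP bP; first by rewrite prod_refl_nil mul1mx.
rewrite prod_refl_cons -mulmxA refl_root ?(sP a) ?mem_head //.
by apply: IH => // x xs; apply: sP; rewrite inE xs orbT.
Qed.

Lemma prod_refl_orthogonal s : {subset s <= Phi} -> orthogonal_mx (prod_refl s).
Proof.
elim: s => [|a s IH] sP; first by rewrite /orthogonal_mx prod_refl_nil trmx1 mulmx1.
rewrite prod_refl_cons; apply: orthogonal_mul.
  by apply/refl_mx_orthogonal/root_neq0/sP/mem_head.
by apply: IH => x xs; apply: sP; rewrite inE xs orbT.
Qed.

Lemma in_W_refl a : a \in Phi -> in_W Phi (refl_mx a).
Proof.
by move=> aP; exists [:: a]; rewrite prod_refl1; split=> // y; rewrite inE => /eqP ->.
Qed.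

Lemma in_W_mul w1 w2 : in_W Phi w1 -> in_W Phi w2 -> in_W Phi (w1 *m w2).
Proof.
move=> [s1 [s1P ->]] [s2 [s2P ->]]; exists (s1 ++ s2); rewrite prod_refl_cat.
by split=> // y; rewrite mem_cat => /orP [/s1P|/s2P].
Qed.

Lemma simple_roots_sub s : {subset s <= Delta} -> {subset s <= Phi}.
Proof. by case: Delta_basis => sub _ _ sD x /sD /sub. Qed.

Lemma mem_simple_roots a : a \in Delta -> exists i, a = Delta`_i.
Proof.
by move=> aD; exists (Ordinal (etrans (index_mem a Delta) aD)); rewrite /= nth_index.
Qed.

Lemma exists_simple_dot_gt0 b : pos b -> exists i, 0 < dot Delta`_i b.
Proof.
move=> [bP [k]]; rewrite -/(simple_comb (natc k)) => bk.
apply/existsP; apply: contraTT (dot_gt0 (root_neq0 bP)) => /existsPn dot_le0.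
rewrite -leNgt {1}bk dotC dot_sumr sumr_le0 // => i _.
by rewrite dotZr dotC mulr_ge0_le0 ?ler0n // leNgt dot_le0.
Qed.

Lemma refl_simple_height i b k : pos b -> b = simple_comb (natc k) ->
    b != Delta`_i -> 0 < dot Delta`_i b ->
  exists k', refl_mx Delta`_i *m b = simple_comb (natc k') /\
             (\sum_j k' j < \sum_j k j)%N.
Proof.
move=> bpos bk bi ib_gt0; have c_ge1 := cartan_ge1 (simple_root_mem i) bpos.1 ib_gt0.
have [_ [k']] := refl_simple_pos bpos bi; rewrite -/(simple_comb (natc k')) => sbk.
exists k'; split=> //; rewrite bk in c_ge1.
set c := 2 * _ / _ in c_ge1.
have /simple_comb_inj kk' : simple_comb (natc k') =
    simple_comb (fun j => natc k j - c * (j == i)%:R) by rewrite -sbk bk refl_simple_comb.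
have sum_k' : (\sum_j k' j)%:R = (\sum_j k j)%:R - c :> R.
  rewrite !natr_sum (eq_bigr _ (fun j _ => kk' j)) sumrB; congr (_ - _).
  by rewrite (bigD1 i) //= eqxx mulr1 big1 ?addr0 // => j /negbTE ->; rewrite mulr0.
by rewrite -(ltr_nat R) sum_k'; lra.
Qed.

Lemma refl_pos_root_word b : pos b ->
  exists s, {subset s <= Delta} /\ refl_mx b = prod_refl s.
Proof.
move=> bpos; have [_ [k]] := bpos; rewrite -/(simple_comb (natc k)) => bk.
have [N] := ubnP (\sum_i k i); elim: N => // N IH in b k bpos bk *; rewrite ltnS => hk.
have [bD|bD] := boolP (b \in Delta).
  by exists [:: b]; rewrite prod_refl1; split=> // x; rewrite inE => /eqP ->.
have [i ib_gt0] := exists_simple_dot_gt0 bpos.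
have Di0 : Delta`_i != 0 := root_neq0 (simple_root_mem i).
have bi : b != Delta`_i by apply: contraNneq bD => ->; exact: mem_nth.
have [k' [sbk hk']] := refl_simple_height bpos bk bi ib_gt0.
have [s [sD es]] := IH _ k' (refl_simple_pos bpos bi) sbk (leq_trans hk' hk).
exists (Delta`_i :: rcons s Delta`_i); split.
  move=> x; rewrite inE mem_rcons inE orbA orbb => /orP [/eqP ->|/sD //].
  exact: mem_nth.
rewrite prod_refl_cons prod_refl_rcons -es (refl_mx_conj _ (refl_mx_orthogonal Di0)).
by rewrite mulmxA refl_mxK ?mul1mx.
Qed.

Lemma refl_root_word b : b \in Phi ->
  exists s, {subset s <= Delta} /\ refl_mx b = prod_refl s.
Proof.
move=> bP; have [bpos|bneg] := root_pos_or_neg bP; first exact: refl_pos_root_word.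
by rewrite -refl_mxN; apply: refl_pos_root_word.
Qed.

Lemma weyl_simple_word s : {subset s <= Phi} ->
  exists t, {subset t <= Delta} /\ prod_refl s = prod_refl t.
Proof.
elim: s => [|a s IH] sP; first by exists [::].
have [t [tD et]] : exists t, {subset t <= Delta} /\ prod_refl s = prod_refl t.
  by apply: IH => x xs; apply: sP; rewrite inE xs orbT.
have [u [uD eu]] := refl_root_word (sP a (mem_head a s)).
exists (u ++ t); split; last by rewrite prod_refl_cons prod_refl_cat eu et.
by move=> x; rewrite mem_cat => /orP [/uD|/tD].
Qed.

(* [Phi] is a sequence and may list a root several times. *)
Definition pos_roots : seq 'cV[R]_n := undup [seq b <- Phi | `[< pos b >]].

Lemma mem_pos_roots b : (b \in pos_roots) = `[< pos b >].
Proof. by rewrite mem_undup mem_filter andb_idr // => /asboolP []. Qed.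

Definition ninv w : nat := (\sum_(b <- pos_roots) `[< pos (- (w *m b)) >])%N.

Lemma pos_root_oppF b : pos b -> `[< pos (- b) >] = false.
Proof. by move=> bpos; apply/asboolF/pos_root_oppN. Qed.

Lemma pos_root_sign b : b \in Phi -> `[< pos b >] = ~~ `[< pos (- b) >].
Proof.
move=> bP; apply/asboolP/asboolPn => [|bnneg]; first exact: pos_root_oppN.
by case: (root_pos_or_neg bP).
Qed.

Lemma ninv_mul_simple w i :
  (ninv (w *m refl_mx Delta`_i) + `[< pos (- (w *m Delta`_i)) >] =
   ninv w + `[< pos (w *m Delta`_i) >])%N.
Proof.
set a := Delta`_i; have a0 : a != 0 := root_neq0 (simple_root_mem i).
have a_pos : a \in pos_roots by rewrite mem_pos_roots; apply/asboolP/simple_root_pos.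
(* s_a permutes the positive roots other than a, and sends a to - a. *)
pose phi b := if b == a then b else refl_mx a *m b.
have phi_pos : {in pos_roots, forall b, phi b \in pos_roots}.
  move=> b; rewrite /phi !mem_pos_roots; case: (eqVneq b a) => // ba /asboolP bpos.
  exact/asboolP/refl_simple_pos.
have phiK : {in pos_roots, involutive phi}.
  move=> b; rewrite mem_pos_roots /phi => /asboolP bpos.
  case: (eqVneq b a) => [->|ba]; first by rewrite !eqxx.
  rewrite mulmxA refl_mxK // mul1mx ifF //; apply/eqP => sba.
  apply: (pos_root_oppN bpos); have -> : b = - a.
    by rewrite -(refl_mx_self a0) -[X in _ *m X]sba mulmxA refl_mxK // mul1mx.
  by rewrite opprK; apply: simple_root_pos.
rewrite /ninv -[in RHS](sum_seq_invol (fun b => `[< pos (- (w *m b)) >])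
  (undup_uniq _) phi_pos phiK).
rewrite !(bigD1_seq a) ?undup_uniq //= /phi eqxx -mulmxA refl_mx_self // mulmxN opprK.
rewrite addnAC [RHS]addnAC [in RHS](addnC `[< _ >]); congr (_ + _).
by apply: eq_bigr => b ba; rewrite (negbTE ba) mulmxA.
Qed.

Lemma exchange_simple u i : {subset u <= Delta} ->
    pos (- (prod_refl u *m Delta`_i)) ->
  exists v, [/\ {subset v <= Delta}, (size v).+1 = size u &
                prod_refl u *m refl_mx Delta`_i = prod_refl v].
Proof.
elim: u => [|a u IH] uD.
  by rewrite prod_refl_nil mul1mx => /(pos_root_oppN (simple_root_pos i)).
have uD' : {subset u <= Delta} by move=> x xu; apply: uD; rewrite inE xu orbT.
have aD : a \in Delta := uD a (mem_head a u).
rewrite prod_refl_cons -!mulmxA; set U := prod_refl u.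
have [Ui_neg _|Ui_nneg sUi_neg] := pselect (pos (- (U *m Delta`_i))).
  have [v [vD sv ev]] := IH uD' Ui_neg; exists (a :: v); split => //.
  - by move=> x; rewrite inE => /orP [/eqP ->|/vD].
  - by rewrite /= sv.
  - by rewrite prod_refl_cons ev.
have UiP : U *m Delta`_i \in Phi.
  by apply: prod_refl_root (simple_root_mem i); apply: simple_roots_sub.
have Ui_pos : pos (U *m Delta`_i) by case: (root_pos_or_neg UiP).
have Uia : U *m Delta`_i = a.
  have [j aj] := mem_simple_roots aD; rewrite aj in sUi_neg *.
  by apply/eqP/contraT => Uij; case: (pos_root_oppN (refl_simple_pos Ui_pos Uij)).
exists u; split => //; have Di0 := root_neq0 (simple_root_mem i).
rewrite -Uia mulmxA (refl_mx_conj _ (prod_refl_orthogonal (simple_roots_sub uD'))).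
by rewrite -mulmxA refl_mxK ?mulmx1.
Qed.

Lemma ninv_length w k : is_length Delta w k -> ninv w = k.
Proof.
elim: k w => [|k IH] w [[s [sD [ws sk]]] smin].
  move: sk ws => /size0nil -> ->; rewrite /ninv big_seq big1 // => b.
  by rewrite mem_pos_roots prod_refl_nil mul1mx => /asboolP /pos_root_oppF ->.
case/lastP: s sD ws sk => [//|s a] sD ws; rewrite size_rcons => -[sk].
have sD' : {subset s <= Delta} by move=> x xs; apply: sD; rewrite mem_rcons inE xs orbT.
have aD : a \in Delta by apply: sD; rewrite mem_rcons mem_head.
have [i ai] := mem_simple_roots aD; rewrite prod_refl_rcons ai in ws.
have s_len : is_length Delta (prod_refl s) k.
  split; first by exists s.
  move=> t tD st; rewrite -ltnS -(size_rcons t a); apply: smin.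
    by move=> x; rewrite mem_rcons inE => /orP [/eqP ->|/tD].
  by rewrite prod_refl_rcons -st ws ai.
have [sDi_neg|sDi_nneg] := pselect (pos (- (prod_refl s *m Delta`_i))).
  have [v [vD sv ev]] := exchange_simple sD' sDi_neg.
  by have := smin v vD; rewrite ws ev -sk -sv ltnNge leqnSn => /(_ erefl).
have sDiP : prod_refl s *m Delta`_i \in Phi.
  by apply: prod_refl_root (simple_root_mem i); apply: simple_roots_sub.
have := ninv_mul_simple (prod_refl s) i.
by rewrite -ws (IH _ s_len) (pos_root_sign sDiP) (asboolF sDi_nneg) addn0 addn1.
Qed.

Lemma weyl_length_ninv w : in_W Phi w -> weyl_length Delta w = ninv w.
Proof.
move=> [s [sP ws]]; have [t [tD st]] := weyl_simple_word sP.
pose word_of k := exists u, {subset u <= Delta} /\ w = prod_refl u /\ size u = k.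
have ex_word : exists k, `[< word_of k >].
  by exists (size t); apply/asboolP; exists t; rewrite ws st.
case: (ex_minnP ex_word) => k /asboolP w_k k_min.
have w_len : is_length Delta w k.
  by split=> // u uD wu; apply: k_min; apply/asboolP; exists u.
by apply/esym/ninv_length; rewrite /weyl_length; apply: epsilon_spec; exists k.
Qed.

Lemma ninv_mul_refl a w : a \in Phi -> in_W Phi w ->
    (forall b, pos b -> pos (- (w *m b)) -> pos (- (refl_mx a *m b))) ->
  (ninv (w *m refl_mx a) + ninv w = ninv (refl_mx a))%N.
Proof.
move=> aP [sw [swP ->]] inv_sub; set x := prod_refl sw; set s := refl_mx a.
have sK b : s *m (s *m b) = b by rewrite mulmxA refl_mxK ?mul1mx ?root_neq0.
have pos_roots_mem b : b \in pos_roots -> b \in Phi.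
  by rewrite mem_pos_roots => /asboolP [].
pose phi b := if `[< pos (s *m b) >] then s *m b else - (s *m b).
have phi_pos : {in pos_roots, forall b, phi b \in pos_roots}.
  move=> b /pos_roots_mem bP; rewrite /phi mem_pos_roots; case: ifPn => //.
  by rewrite pos_root_sign ?refl_root // negbK.
have phiK : {in pos_roots, involutive phi}.
  move=> b; rewrite mem_pos_roots /phi => /asboolP bpos.
  have [_|_] := boolP `[< pos (s *m b) >]; first by rewrite sK (asboolT bpos).
  by rewrite mulmxN sK (pos_root_oppF bpos) opprK.
rewrite /ninv -(sum_seq_invol (fun b => `[< pos (- (x *m b)) >]) (undup_uniq _)
  phi_pos phiK).
rewrite -big_split /=; apply: eq_big_seq => b /[dup] /pos_roots_mem bP.
rewrite mem_pos_roots => /asboolP bpos; have sbP : s *m b \in Phi by rewrite refl_root.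
have xsbP : x *m (s *m b) \in Phi by apply: prod_refl_root.
rewrite /phi -mulmxA; case: ifPn => [/asboolP sb_pos|].
  rewrite (pos_root_oppF sb_pos) (asboolF (_ : ~ pos (- (x *m (s *m b))))) //.
  by move=> /(inv_sub _ sb_pos); rewrite sK; apply: pos_root_oppN.
rewrite (pos_root_sign sbP) negbK => ->; rewrite mulmxN opprK (pos_root_sign xsbP).
by case: `[< _ >].
Qed.

Lemma simple_roots_uniq : uniq Delta.
Proof.
apply/(uniqP 0) => i j; rewrite !inE => im jm Dij; apply/eqP/negPn/negP => ij.
pose I := Ordinal im; pose J := Ordinal jm.
have : simple_comb (fun l => 1 * (l == I)%:R) = simple_comb (fun l => 1 * (l == J)%:R).
  by rewrite !simple_comb_delta /= Dij.
have IJ : I != J by rewrite -val_eqE.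
move=> /simple_comb_inj /(_ I); rewrite !mul1r eqxx (negbTE IJ).
by move=> /eqP; rewrite oner_eq0.
Qed.

Variable ah : 'cV[R]_n.
Hypothesis ah_highest : highest_root Phi Delta ah.

Lemma highest_root_dominant i : 0 <= dot Delta`_i ah.
Proof.
rewrite leNgt; apply/negP => iah_lt0; have [[ahP [h ahh]] ah_max] := ah_highest.
rewrite -/(simple_comb (natc h)) in ahh.
set c := 2 * dot Delta`_i ah / dot Delta`_i Delta`_i.
have c_lt0 : c < 0.
  by rewrite /c pmulr_llt0 ?invr_gt0 ?dot_gt0 ?root_neq0 ?simple_root_mem // pmulr_rlt0.
have sahP : refl_mx Delta`_i *m ah \in Phi by rewrite refl_root ?simple_root_mem.
have sah : refl_mx Delta`_i *m ah = simple_comb (fun j => natc h j - c * (j == i)%:R).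
  by rewrite ahh refl_simple_comb -ahh.
have := ler0n R (h i); case: (root_pos_or_neg sahP) => [/ah_max [p]|[_ [q]]].
  rewrite -/(simple_comb (natc p)) sah ahh simple_combB => /simple_comb_inj/(_ i).
  by rewrite eqxx mulr1 /natc => pi; have := ler0n R (p i); lra.
rewrite -/(simple_comb (natc q)) sah simple_combN => /simple_comb_inj/(_ i).
by rewrite eqxx mulr1 /natc => qi; have := ler0n R (q i); lra.
Qed.

Lemma dot_highest_pos_ge0 b : pos b -> 0 <= dot ah b.
Proof.
move=> [_ [k ->]]; rewrite dot_sumr sumr_ge0 // => j _.
by rewrite dotZr mulr_ge0 ?ler0n // dotC highest_root_dominant.
Qed.

Lemma refl_highest_neg b : pos b -> 0 < dot ah b -> pos (- (refl_mx ah *m b)).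
Proof.
move=> bpos ahb_gt0; have [[ahP [h ahh]] ah_max] := ah_highest.
rewrite -/(simple_comb (natc h)) in ahh.
have [bP [k]] := bpos; rewrite -/(simple_comb (natc k)) => bk.
have sbP : refl_mx ah *m b \in Phi by rewrite refl_root.
case: (root_pos_or_neg sbP) => // [[_ [l]]]; rewrite -/(simple_comb (natc l)) => sbl.
have [q] := ah_max _ bpos; rewrite -/(simple_comb (natc q)) => ahbq.
have c_ge1 := cartan_ge1 ahP bP ahb_gt0; set c := 2 * _ / _ in c_ge1.
have /simple_comb_inj lkh : simple_comb (natc l) =
    simple_comb (fun j => natc k j - c * natc h j).
  by rewrite -sbl refl_mxE -/c bk ahh simple_combZ simple_combB.
have /simple_comb_inj qhk : simple_comb (natc q) =
    simple_comb (fun j => natc h j - natc k j) by rewrite -ahbq bk ahh simple_combB.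
have l0 j : l j = 0%N.
  have := lkh j; have := qhk j; rewrite /natc => qj lj.
  have : 0 <= (c - 1) * (h j)%:R by rewrite mulr_ge0 ?subr_ge0.
  have := ler0n R (q j); move=> *; apply/eqP; rewrite -(pnatr_eq0 R) eq_le ler0n andbT.
  lra.
case/negP: (root_neq0 sbP); rewrite sbl /simple_comb big1 // => j _.
by rewrite /natc l0 scale0r.
Qed.

Lemma pos_root_span_Itilde b : pos b -> dot ah b = 0 -> in_span (Itilde Delta ah) b.
Proof.
move=> [bP [k bk]] ahb0.
have k0 j : dot ah Delta`_j != 0 -> k j = 0%N.
  move=> ahj; move: ahb0; rewrite bk dot_sumr => /eqP.
  rewrite psumr_eq0 => [/allP /(_ j (mem_index_enum _)) /=|l _]; last first.
    by rewrite dotZr mulr_ge0 ?ler0n // dotC highest_root_dominant.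
  by rewrite dotZr mulf_eq0 (negbTE ahj) orbF pnatr_eq0 => /eqP.
pose f x := \sum_(l < m | Delta`_l == x) natc k l.
have fk j : f Delta`_j = natc k j.
  rewrite /f (bigD1 j) //= big1 ?addr0 // => l /andP [/eqP Dlj lj].
  move: lj; rewrite -val_eqE -(nth_uniq 0 (ltn_ord l) (ltn_ord j) simple_roots_uniq).
  by rewrite Dlj eqxx.
set It := Itilde Delta ah; exists (fun j : 'I_(size It) => f It`_j).
have -> : \sum_(j < size It) f It`_j *: It`_j = \sum_(x <- It) f x *: x.
  by rewrite (big_nth 0) big_mkord.
rewrite /It big_filter big_mkcond (big_nth 0) big_mkord bk; apply: eq_bigr => j _.
by case: eqP => [_|/eqP ahj]; rewrite ?fk // k0 // scale0r.
Qed.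

Lemma in_X_inversions x : in_X Phi Delta ah x ->
  forall b, pos b -> pos (- (x *m b)) -> pos (- (refl_mx ah *m b)).
Proof.
move=> [_ x_pos] b bpos xb_neg; have := dot_highest_pos_ge0 bpos.
rewrite le_eqVlt => /orP [/eqP ahb0|]; last exact: refl_highest_neg.
by case: (pos_root_oppN (x_pos b bpos (pos_root_span_Itilde bpos (esym ahb0)))).
Qed.
End RootSystem.

Theorem proposition1p6 (R : realType) (n : nat) (Phi Delta : seq 'cV[R]_n)
    (ah : 'cV[R]_n) :
  root_system Phi -> reduced Phi -> irreducible Phi -> is_basis Phi Delta ->
  highest_root Phi Delta ah ->
  forall (alpha : 'cV[R]_n) (x : 'M[R]_n),
    pos_root Phi Delta alpha -> long_root Phi alpha ->
    in_X Phi Delta ah x -> x *m ah = alpha ->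
    (weyl_length Delta (x *m refl_mx ah))%:Z
      = (weyl_length Delta (refl_mx ah))%:Z - (weyl_length Delta x)%:Z.
Proof.
move=> Phi_root Phi_reduced _ Delta_basis ah_highest alpha x _ _ xX _.
have ahP : ah \in Phi by case: ah_highest => [[]].
have [xW _] := xX; have sW := in_W_refl ahP; have xsW := in_W_mul xW sW.
rewrite !(weyl_length_ninv Phi_root Phi_reduced Delta_basis) //.
have inv_sub := in_X_inversions Phi_root Delta_basis ah_highest xX.
by rewrite -(ninv_mul_refl Phi_root Delta_basis ahP xW inv_sub) PoszD addrK.
Qed.
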